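(* For $g\in GL_d(\mathbb{Q})$ and $R\ge0$ let $B(g,R)=\{h\in GL_d(\mathbb{Q}) : d(g,h)\le R\}$. Then there exists a constant $C>0$ such that for all $g\in GL_d(\mathbb{Q})$ and all $R\ge0$, $|B(g,R)|\le Ce^{CR}$.
   Context: $\mathcal{P}$ is the set of primes together with $\infty$; $\mathbb{Q}_\infty=\mathbb{R}$. For $v\in\mathbb{Q}_p^d$, $|v|_p=\max_i|v_i|_p$ if $p$ prime ($|\cdot|_p$ the $p$-adic absolute value) and the Euclidean norm if $p=\infty$; $\|g\|_p=\sup_{|v|_p=1}|gv|_p$. $d_p(g,h)=\ln^+\|g^{-1}h\|_p+\ln^+\|h^{-1}g\|_p$ and, for $g,h\in GL_d(\mathbb{Q})$, $d(g,h)=\sum_{p\in\mathcal{P}}d_p(g,h)$. $|\cdot|$ denotes cardinality. *)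

From HB Require Import structures.
From mathcomp Require Import all_boot all_order all_algebra.
From mathcomp Require Import all_classical all_reals all_analysis.
Set Implicit Arguments. Unset Strict Implicit. Unset Printing Implicit Defensive.
Import Order.TTheory GRing.Theory Num.Theory.
Local Open Scope ring_scope.
Local Open Scope classical_set_scope.

Section Defs.
Variable R : realType.

Definition lnp (x : R) : R := Num.max 0 (ln x).

Definition padic_abs (p : nat) (x : rat) : R :=
  if x == 0 then 0
  else (p%:R ^+ logn p `|denq x|%N) / (p%:R ^+ logn p `|numq x|%N).

Definition padic_vnorm (p : nat) (d : nat) (v : 'cV[rat]_d) : R :=
  \big[Num.max/0]_(i < d) padic_abs p (v i ord0).

(* ||g||_p = sup_{|v|_p = 1} |g v|_p  (v ranging over Q^d, dense in Q_p^d) *)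
Definition padic_opnorm (p : nat) (d : nat) (g : 'M[rat]_d) : R :=
  sup [set padic_vnorm p (g *m v) | v in [set v : 'cV[rat]_d | padic_vnorm p v = 1]].

Definition eucl_norm (d : nat) (v : 'cV[R]_d) : R :=
  Num.sqrt (\sum_(i < d) (v i ord0) ^+ 2).

Definition inf_opnorm (d : nat) (g : 'M[rat]_d) : R :=
  sup [set eucl_norm (map_mx ratr g *m v) | v in [set v : 'cV[R]_d | eucl_norm v = 1]].

Definition dist_p (p : nat) (d : nat) (g h : 'M[rat]_d) : R :=
  lnp (padic_opnorm p (invmx g *m h)) + lnp (padic_opnorm p (invmx h *m g)).

Definition dist_inf (d : nat) (g h : 'M[rat]_d) : R :=
  lnp (inf_opnorm (invmx g *m h)) + lnp (inf_opnorm (invmx h *m g)).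

Definition dist (d : nat) (g h : 'M[rat]_d) : R :=
  dist_inf g h + limn (fun N => \sum_(0 <= p < N | prime p) dist_p p g h).

End Defs.

From HB Require Import structures.
From mathcomp Require Import all_boot all_order all_algebra.
From mathcomp Require Import all_classical all_reals all_analysis.
From mathcomp Require Import zify ring lra.
Set Implicit Arguments. Unset Strict Implicit. Unset Printing Implicit Defensive.
Import Order.TTheory GRing.Theory Num.Theory.
Local Open Scope ring_scope.

(* If d(g, h) <= r then every entry of k = g^-1 h has real absolute value at
   most e^(d_oo) and, since p^(v_p(den)) = |k_ij|_p <= ||k||_p <= e^(d_p),
   denominator at most prod_p e^(d_p); together numerator and denominator of
   every entry are at most e^r.  The map h |-> g^-1 h is injective, so B(g, r)
   has at most ((2e^r + 1)(e^r + 1))^(d^2) <= 6^(d^2) e^(2 d^2 r) elements. *)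

Definition p_int (p : nat) (x : rat) : bool := ~~ (p %| `|denq x|)%N.

Lemma denq_frac_dvd (n d : int) : d != 0 -> (`|denq (n%:~R / d%:~R)| %| `|d|)%N.
Proof.
move=> dn0; have := den_fracq (n, d); rewrite fracqE /= dn0 => ->.
by rewrite absz_nat; apply/dvdn_div; exact: dvdn_gcdr.
Qed.

Section PIntegral.
Variable p : nat.
Hypothesis p_pr : prime p.

Lemma p_int_frac (n d : int) : d != 0 -> ~~ (p %| `|d|)%N -> p_int p (n%:~R / d%:~R).
Proof.
move=> dn0 hp; apply/negP => /dvdn_trans /(_ (denq_frac_dvd n dn0)); exact/negP.
Qed.

Lemma p_int_int (n : int) : p_int p n%:~R.
Proof.
rewrite /p_int denq_int /= dvdn1; apply/negP => /eqP p1.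
by move: p_pr; rewrite p1.
Qed.

Lemma p_intD x y : p_int p x -> p_int p y -> p_int p (x + y).
Proof.
move=> hx hy; have dx := denq_neq0 x; have dy := denq_neq0 y.
have -> : x + y = (numq x * denq y + numq y * denq x)%:~R / (denq x * denq y)%:~R.
  rewrite -{1}(divq_num_den x) -{1}(divq_num_den y) !rmorphD !rmorphM /=; field.
  by rewrite !intr_eq0 dx dy.
apply: p_int_frac; first by rewrite mulf_neq0.
by rewrite abszM Euclid_dvdM // negb_or; apply/andP.
Qed.

Lemma p_intM x y : p_int p x -> p_int p y -> p_int p (x * y).
Proof.
move=> hx hy; have dx := denq_neq0 x; have dy := denq_neq0 y.
have -> : x * y = (numq x * numq y)%:~R / (denq x * denq y)%:~R.
  rewrite -{1}(divq_num_den x) -{1}(divq_num_den y) !rmorphM /=; field.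
  by rewrite !intr_eq0 dx dy.
apply: p_int_frac; first by rewrite mulf_neq0.
by rewrite abszM Euclid_dvdM // negb_or; apply/andP.
Qed.

Lemma p_int_sum (I : Type) (r : seq I) (P : pred I) (F : I -> rat) :
  (forall i, P i -> p_int p (F i)) -> p_int p (\sum_(i <- r | P i) F i).
Proof.
move=> h; apply: (big_ind (p_int p)) => //; last exact: p_intD.
by have := p_int_int 0; rewrite mulr0z.
Qed.

End PIntegral.

Section PadicAbs.
Variable R : realType.
Variable p : nat.
Hypothesis p_pr : prime p.

Lemma padic_abs0 : padic_abs R p 0 = 0.
Proof. by rewrite /padic_abs eqxx. Qed.

Lemma padic_abs1 : padic_abs R p 1 = 1.
Proof. by rewrite /padic_abs oner_eq0 /= logn1 expr0 divr1. Qed.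

Lemma padic_abs_le_pden x : padic_abs R p x <= (p ^ logn p `|denq x|)%:R.
Proof.
rewrite /padic_abs; case: eqP => _; first exact: ler0n.
rewrite natrX ler_pdivrMr ?exprn_gt0 ?ltr0n ?prime_gt0 //.
by rewrite ler_peMr ?exprn_ge0 ?ler0n // exprn_ege1 // ler1n prime_gt0.
Qed.

Lemma padic_abs_pden x : (p %| `|denq x|)%N ->
  padic_abs R p x = (p ^ logn p `|denq x|)%:R.
Proof.
move=> hd; have p_gt1 := prime_gt1 p_pr.
have xn0 : x != 0.
  by apply: contraTneq hd => ->; rewrite /= dvdn1 gtn_eqF.
rewrite /padic_abs (negPf xn0) (@logn_coprime p `|numq x|) ?expn0 ?divr1 ?natrX //.
rewrite prime_coprime //; apply/negP => hn.
have : (p %| gcdn `|numq x| `|denq x|)%N by rewrite dvdn_gcd hn.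
by move: (coprime_num_den x); rewrite /coprime => /eqP ->; rewrite dvdn1 gtn_eqF.
Qed.

Lemma padic_abs_le1E x : (padic_abs R p x <= 1) = p_int p x.
Proof.
apply/idP/idP => [|hx].
  apply: contraLR; rewrite negbK => hd.
  rewrite padic_abs_pden // -ltNge ltr1n; apply: leq_trans (prime_gt1 p_pr) _.
  rewrite -{1}(expn1 p) leq_pexp2l ?(prime_gt0 p_pr) //.
  by rewrite logn_gt0 mem_primes p_pr hd absz_gt0 denq_neq0.
apply: (le_trans (padic_abs_le_pden x)).
by rewrite logn_coprime ?expn0 // prime_coprime.
Qed.

Lemma padic_abs_le_natr x n : (0 < n)%N -> p_int p (n%:R * x) ->
  padic_abs R p x <= n%:R.
Proof.
move=> n0 hy; apply: (le_trans (padic_abs_le_pden x)); rewrite ler_nat.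
set y := n%:R * x in hy.
have ex : x = (numq y)%:~R / (n%:Z * denq y)%:~R.
  rewrite numqE rmorphM /= /y -[(n%:Z)%:~R]/(n%:R : rat); field.
  by rewrite intr_eq0 denq_neq0 pnatr_eq0 -lt0n n0.
have hdv : (`|denq x| %| n * `|denq y|)%N.
  rewrite {1}ex; have := @denq_frac_dvd (numq y) (n%:Z * denq y).
  by rewrite abszM absz_nat; apply; rewrite mulf_neq0 ?denq_neq0 // eqz_nat -lt0n.
have hl : (logn p `|denq x| <= logn p n)%N.
  apply: (leq_trans (dvdn_leq_log p _ hdv)).
    by rewrite muln_gt0 n0 absz_gt0 denq_neq0.
  rewrite lognM // ?absz_gt0 ?denq_neq0 //.
  by rewrite (@logn_coprime p `|denq y|) ?addn0 // prime_coprime.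
apply: (leq_trans _ (dvdn_leq n0 (pfactor_dvdnn p n))).
by rewrite leq_pexp2l ?prime_gt0.
Qed.

End PadicAbs.

Section PadicOpnorm.
Variable R : realType.
Variable d : nat.
Variable p : nat.
Hypothesis p_pr : prime p.

Lemma padic_vnorm_ge_entry (v : 'cV[rat]_d) i : padic_abs R p (v i ord0) <= padic_vnorm R p v.
Proof. exact: le_bigmax. Qed.

Lemma padic_vnorm_delta (j : 'I_d) : padic_vnorm R p (delta_mx j ord0) = 1.
Proof.
apply/le_anti/andP; split.
  apply: bigmax_le => // i _; rewrite mxE eqxx andbT.
  by case: eqP => _; rewrite ?padic_abs1 ?padic_abs0.
by rewrite /padic_vnorm (bigmaxD1 j) //= mxE !eqxx /= padic_abs1 // le_max lexx.
Qed.

Lemma padic_opnorm_le1 (m : 'M[rat]_d) : (forall i j, p_int p (m i j)) ->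
  padic_opnorm R p m <= 1.
Proof.
move=> hm; rewrite /padic_opnorm; set A := (X in sup X).
have [-> |/set0P A0] := eqVneq A set0; first by rewrite sup0 ler01.
apply: ge_sup => // _ [v /= v1 <-]; apply: bigmax_le => // i _.
rewrite padic_abs_le1E // mxE; apply: p_int_sum => // j _; apply: p_intM => //.
by rewrite -(padic_abs_le1E R) // -v1 padic_vnorm_ge_entry.
Qed.

(* The supremum is over a set bounded by the product of all denominators of m. *)
Lemma padic_opnorm_ge_entry (m : 'M[rat]_d) i j : padic_abs R p (m i j) <= padic_opnorm R p m.
Proof.
rewrite /padic_opnorm; set A := (X in sup X).
have hA : has_ubound A.
  pose D := (\prod_(k : 'I_d * 'I_d) `|denq (m k.1 k.2)|)%N.
  have D0 : (0 < D)%N by rewrite prodn_gt0 // => k; rewrite absz_gt0 denq_neq0.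
  exists D%:R => _ [v /= v1 <-]; apply: bigmax_le => // i' _.
  apply: padic_abs_le_natr => //; rewrite mxE mulr_sumr; apply: p_int_sum => // j' _.
  rewrite mulrA; apply: p_intM => //; last first.
    by rewrite -(padic_abs_le1E R) // -v1 padic_vnorm_ge_entry.
  rewrite /D (bigD1 (i', j')) //= natrM mulrAC.
  rewrite -[(`|denq _|%:R : rat)]/((`|denq (m i' j')|%:Z)%:~R) absz_denq.
  by rewrite [_ * m i' j']mulrC -numqE pmulrn; apply: p_intM => //; exact: p_int_int.
apply: le_trans (ub_le_sup hA _); last by exists (delta_mx j ord0); first exact: padic_vnorm_delta.
by apply: le_trans (padic_vnorm_ge_entry _ i); rewrite -colE mxE.
Qed.

End PadicOpnorm.

Section InfOpnorm.
Variable R : realType.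
Variable d : nat.

Lemma eucl_norm_ge_entry (v : 'cV[R]_d) i : `|v i ord0| <= eucl_norm v.
Proof.
rewrite /eucl_norm -sqrtr_sqr; apply: ler_wsqrtr.
by rewrite (bigD1 i) //= lerDl; apply: sumr_ge0 => k _; exact: sqr_ge0.
Qed.

Lemma eucl_norm_delta (j : 'I_d) : eucl_norm (delta_mx j ord0 : 'cV[R]_d) = 1.
Proof.
rewrite /eucl_norm (bigD1 j) //= mxE !eqxx /= big1 ?addr0 ?expr1n ?sqrtr1 //.
by move=> k kj; rewrite mxE (negPf kj) /= expr0n.
Qed.

Lemma inf_opnorm_ge_entry (m : 'M[rat]_d) i j : `|ratr (m i j) : R| <= inf_opnorm R m.
Proof.
rewrite /inf_opnorm; set M := map_mx ratr m; set A := (X in sup X).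
have hA : has_ubound A.
  exists (Num.sqrt (\sum_i (\sum_j `|M i j|) ^+ 2)) => _ [v /= v1 <-].
  rewrite /eucl_norm; apply: ler_wsqrtr; apply: ler_sum => i' _.
  rewrite -real_normK ?num_real //; apply: lerXn2r; rewrite ?nnegrE ?sumr_ge0 // mxE.
  apply: (le_trans (ler_norm_sum _ _ _)); apply: ler_sum => j' _.
  by rewrite normrM ler_piMr // -v1 eucl_norm_ge_entry.
apply: le_trans (ub_le_sup hA _); last by exists (delta_mx j ord0); first exact: eucl_norm_delta.
by apply: le_trans (eucl_norm_ge_entry _ i); rewrite -colE !mxE.
Qed.

End InfOpnorm.

Lemma lnp_ge0 (R : realType) (x : R) : 0 <= lnp x.
Proof. by rewrite le_max lexx. Qed.

Lemma le_expR_lnp (R : realType) (x : R) : x <= expR (lnp x).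
Proof.
have [x_le0|x_gt0] := lerP x 0; first by apply: le_trans x_le0 (expR_ge0 _).
by rewrite -{1}(lnK (x := x)) ?posrE // ler_expR le_max lexx orbT.
Qed.

Section Dist.
Variable R : realType.
Variable d : nat.
Variables g h : 'M[rat]_d.

Definition dist_psum (N : nat) := \sum_(0 <= p < N | prime p) dist_p R p g h.

Let k := invmx g *m h.
Let k' := invmx h *m g.

Lemma dist_p_ge0 p : 0 <= dist_p R p g h.
Proof. by rewrite addr_ge0 ?lnp_ge0. Qed.

Lemma dist_inf_ge0 : 0 <= dist_inf R g h.
Proof. by rewrite addr_ge0 ?lnp_ge0. Qed.

Lemma nondecreasing_dist_psum : nondecreasing_seq dist_psum.
Proof.
move=> n m nm; rewrite /dist_psum (big_cat_nat (leq0n n) nm) /= lerDl.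
by apply: sumr_ge0 => p _; exact: dist_p_ge0.
Qed.

(* A prime exceeding every denominator of g^-1 h and h^-1 g contributes nothing. *)
Lemma dist_p_eventually0 :
  exists B, forall p, (B <= p)%N -> prime p -> dist_p R p g h = 0.
Proof.
exists (\sum_(ij : 'I_d * 'I_d) (`|denq (k ij.1 ij.2)| + `|denq (k' ij.1 ij.2)|)).+1%N.
move=> p Bp pp.
have lnp0 (m : 'M[rat]_d) : (forall i j, (`|denq (m i j)| < p)%N) ->
    lnp (padic_opnorm R p m) = 0.
  move=> hm; apply/le_anti; rewrite lnp_ge0 andbT ge_max lexx ln_le0 //.
  apply: padic_opnorm_le1 => // i j; apply/negP => /dvdn_leq.
  by rewrite absz_gt0 denq_neq0 => /(_ isT); rewrite leqNgt hm.
by rewrite /dist_p !lnp0 ?addr0 // => i j; apply: leq_trans Bp;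
  rewrite ltnS (bigD1 (i, j)) //= -/k -/k'; lia.
Qed.

Lemma dist_psum_le_lim N : dist_psum N <= limn dist_psum.
Proof.
apply: nondecreasing_cvgn_le; first exact: nondecreasing_dist_psum.
apply: nondecreasing_is_cvgn; first exact: nondecreasing_dist_psum.
have [B hB] := dist_p_eventually0.
exists (dist_psum B) => _ [n _ <-].
have [nB|Bn] := leqP n B; first exact: nondecreasing_dist_psum.
rewrite /dist_psum (big_cat_nat (leq0n B) (ltnW Bn)) /= [X in _ + X]big1_seq ?addr0 //.
by move=> p /andP [pp]; rewrite mem_index_iota => /andP [Bp _]; exact: hB.
Qed.

Lemma denq_le_expR_lim i j : (`|denq (k i j)|%:R : R) <= expR (limn dist_psum).
Proof.
set n := `|denq (k i j)|%N; have n0 : (0 < n)%N by rewrite absz_gt0 denq_neq0.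
apply: (@le_trans _ _ (expR (dist_psum n.+1))); last by rewrite ler_expR dist_psum_le_lim.
rewrite -{1}(partnT n0) /partn /dist_psum expR_sum natr_prod.
rewrite [X in X <= _]big_mkcond [X in _ <= X]big_mkcond /=.
apply: ler_prod => p _; case: ifP => pr; last first.
  have -> : logn p n = 0%N by rewrite /logn pr.
  by rewrite expn0 ler01 lexx.
rewrite ler0n /=.
have [->|lp] := eqVneq (logn p n) 0%N.
  by rewrite expn0 -expR0 ler_expR dist_p_ge0.
have pn : (p %| n)%N by move: lp; rewrite -lt0n logn_gt0 mem_primes => /and3P [].
rewrite -(padic_abs_pden R pr pn).
apply: le_trans (padic_opnorm_ge_entry R pr k i j) _.
by apply: le_trans (le_expR_lnp _) _; rewrite ler_expR lerDl lnp_ge0.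
Qed.

Lemma ratr_le_expR_dist_inf i j : `|ratr (k i j) : R| <= expR (dist_inf R g h).
Proof.
apply: le_trans (inf_opnorm_ge_entry R k i j) _.
by apply: le_trans (le_expR_lnp _) _; rewrite ler_expR lerDl lnp_ge0.
Qed.

Lemma num_den_le_expR_dist i j (r : R) : dist R g h <= r ->
  (`|numq (k i j)|%:R : R) <= expR r /\ (`|denq (k i j)|%:R : R) <= expR r.
Proof.
move=> hr; have e1 : expR (dist_inf R g h) * expR (limn dist_psum) <= expR r.
  by rewrite -expRD ler_expR.
split; apply: le_trans e1.
  have -> : (`|numq (k i j)|%:R : R) = `|ratr (k i j) : R| * `|denq (k i j)|%:R.
    rewrite !natr_absz !intr_norm -normrM; congr `|_|.
    by rewrite -[LHS]ratr_int numqE rmorphM /= ratr_int.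
  by rewrite ler_pM ?ratr_le_expR_dist_inf ?denq_le_expR_lim.
apply: le_trans (denq_le_expR_lim i j) _.
by rewrite ler_peMl ?expR_ge0 // -expR0 ler_expR dist_inf_ge0.
Qed.

End Dist.

(* A rational with |num| <= N and den <= N is coded by (num + N, den) in 'I_(2N+1) * 'I_(N+1). *)
Lemma size_uniq_num_den_bounded (d N : nat) (s : seq 'M[rat]_d) : uniq s ->
  (forall k i j, k \in s -> (`|numq (k i j)| <= N)%N /\ (`|denq (k i j)| <= N)%N) ->
  (size s <= ((N + N).+1 * N.+1) ^ (d * d))%N.
Proof.
move=> us hs.
pose T := {ffun 'I_d * 'I_d -> 'I_(N + N).+1 * 'I_N.+1}.
pose F : T -> 'M[rat]_d := fun f =>
  \matrix_(i, j) (((((f (i, j)).1 : nat)%:Z - N%:Z)%:~R : rat) / ((f (i, j)).2 : nat)%:R).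
have inF k : k \in s -> k \in codom F.
  move=> ks; apply/codomP.
  exists [ffun ij => (inord `|numq (k ij.1 ij.2) + N%:Z|, inord `|denq (k ij.1 ij.2)|)].
  apply/matrixP => i j; rewrite mxE ffunE /=.
  have [bn bd] := hs k i j ks.
  move: bn; set z := numq (k i j) => bn.
  rewrite !inordK ?ltnS //; last by lia.
  have -> : ((`|(z + N%:Z)%R|%N)%:Z - N%:Z)%R = z by lia.
  by rewrite -[(`|denq _|%:R : rat)]/((`|denq (k i j)|%:Z)%:~R) absz_denq divq_num_den.
have -> : (((N + N).+1 * N.+1) ^ (d * d))%N = #|T|.
  by rewrite card_ffun !card_prod !card_ord.
by rewrite -(size_codom F); exact: uniq_leq_size.
Qed.

Lemma natr_grid_card_le (R : realType) (N n : nat) (E : R) : 1 <= E -> N%:R <= E ->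
  (((N + N).+1 * N.+1) ^ n)%:R <= 6 ^+ n * E ^+ (2 * n).
Proof.
move=> E1 NE; rewrite natrX exprM -exprMn natrM.
have h1 : ((N + N).+1%:R : R) <= 3 * E by rewrite -addn1 !natrD; lra.
have h2 : (N.+1%:R : R) <= 2 * E by rewrite -addn1 natrD; lra.
have E0 : 0 <= E by lra.
apply: lerXn2r; rewrite ?nnegrE ?mulr_ge0 ?sqr_ge0 ?ler0n //.
by rewrite expr2 (_ : 6 * (E * E) = 3 * E * (2 * E)) ?ler_pM //; ring.
Qed.

Theorem lemma4p2 (R : realType) (d : nat) :
  exists C : R, 0 < C /\
    forall (g : 'M[rat]_d) (r : R), g \in unitmx -> 0 <= r ->
      forall s : seq 'M[rat]_d, uniq s ->
        (forall h, h \in s -> h \in unitmx /\ dist R g h <= r) ->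
        (size s)%:R <= C * expR (C * r).
Proof.
set n := (d * d)%N; exists (6 ^ n + 2 * n)%N%:R; split.
  by rewrite ltr0n addn_gt0 expn_gt0.
move=> g r gu r0 s us hs.
have E1 : 1 <= expR r by rewrite -expR0 ler_expR.
set N := Num.truncn (expR r); have NE : (N%:R : R) <= expR r by rewrite truncn_le.
have size_s : (size s <= ((N + N).+1 * N.+1) ^ n)%N.
  rewrite -(size_map (mulmx (invmx g))); apply: size_uniq_num_den_bounded.
    by rewrite (map_inj_uniq (can_inj (mulKVmx gu))).
  move=> _ i j /mapP [h /hs [_ dh] ->].
  by have [] := num_den_le_expR_dist i j dh; rewrite -!truncn_ge_nat.
apply: (@le_trans _ _ ((6 ^ n)%N%:R * expR ((2 * n)%N%:R * r))).
  rewrite natrX expRM_natl; apply: le_trans (natr_grid_card_le n E1 NE).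
  by rewrite ler_nat.
rewrite ler_pM ?ler0n ?expR_ge0 ?ler_nat ?leq_addr // ler_expR ler_wpM2r //.
by rewrite ler_nat leq_addl.
Qed.
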